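(* Let $X\in\mathbb{R}^{n\times p}$ and $\Psi=\frac1nX^\top X$ satisfy $\Psi_{jj}=1$ and $\max_{j'\ne j}|\Psi_{jj'}|\le\frac{1}{7\alpha s}$ for all $j\in[p]$, for some integer $s\ge1$ and some $\alpha>1$. Let $B^*\in\mathbb{R}^{p\times q}$ with row support $\mathcal S^*=\{j:\|B^*_{j:}\|_2\ne0\}$ satisfying $|\mathcal S^*|\le s$, and let $\hat B\in\mathbb{R}^{p\times q}$ be such that $\Delta=\hat B-B^*$ satisfies $\|\Delta_{\mathcal S^{*c}}\|_{2,1}\le3\|\Delta_{\mathcal S^*}\|_{2,1}$. Then (a) $\|\Delta_{\mathcal S^*}\|_F\le\frac{\alpha}{\alpha-1}4\sqrt s\,\|\Psi\Delta\|_{2,\infty}$; (b) $\|\Delta\|_{2,1}\le\frac{\alpha}{\alpha-1}16s\,\|\Psi\Delta\|_{2,\infty}$; (c) $\|\Delta\|_{2,\infty}\le\Big(1+\frac{16}{7(\alpha-1)}\Big)\|\Psi\Delta\|_{2,\infty}$.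
   Context: $M_{j:}$ is the $j$-th row of $M$; $\|M\|_{2,1}=\sum_j\|M_{j:}\|_2$, $\|M\|_{2,\infty}=\max_j\|M_{j:}\|_2$, $\|\cdot\|_F$ Frobenius norm. For $\mathcal S\subset[p]$, $M_{\mathcal S}$ equals $M$ on rows indexed by $\mathcal S$ and is zero elsewhere; $\mathcal S^{*c}=[p]\setminus\mathcal S^*$. *)

From HB Require Import structures.
From mathcomp Require Import all_boot all_order all_algebra.
From mathcomp Require Import reals.
Set Implicit Arguments. Unset Strict Implicit. Unset Printing Implicit Defensive.
Import Order.TTheory GRing.Theory Num.Theory.
Local Open Scope ring_scope.

Section Norms.
Variable R : realType.

Definition rownorm (p q : nat) (M : 'M[R]_(p, q)) (j : 'I_p) : R :=
  Num.sqrt (\sum_(k < q) M j k ^+ 2).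

Definition norm21 (p q : nat) (M : 'M[R]_(p, q)) : R :=
  \sum_(j < p) rownorm M j.

(* ||M||_{2,oo} = max_j ||M_{j:}||_2 (0 for an empty matrix; row norms are >= 0) *)
Definition norm2inf (p q : nat) (M : 'M[R]_(p, q)) : R :=
  \big[Num.max/0]_(j < p) rownorm M j.

Definition frob (p q : nat) (M : 'M[R]_(p, q)) : R :=
  Num.sqrt (\sum_(j < p) \sum_(k < q) M j k ^+ 2).

Definition rowrestr (p q : nat) (S : {set 'I_p}) (M : 'M[R]_(p, q)) : 'M[R]_(p, q) :=
  \matrix_(j, k) (if j \in S then M j k else 0).

Definition rowsupp (p q : nat) (M : 'M[R]_(p, q)) : {set 'I_p} :=
  [set j | rownorm M j != 0].

End Norms.

(* Since Psi has unit diagonal, row j of Delta equals row j of Psi Delta minus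
   sum_(j' <> j) Psi_(j j') Delta_(j'), so incoherence bounds every row norm of
   Delta by ||Psi Delta||_(2,oo) + e, where e = ||Delta||_(2,1) / (7 alpha s).
   The cone condition and |S*| <= s give
   ||Delta||_(2,1) <= 4 ||Delta_S*||_(2,1) <= 4 s (||Psi Delta||_(2,oo) + e);
   as ||Delta||_(2,1) = 7 alpha s e, this forces
   7 (alpha - 1) e <= 16 ||Psi Delta||_(2,oo).  Then (c) is the row bound,
   (a) sums its square over S*, and (b) is the bound on e times 7 alpha s. *)

From HB Require Import structures.
From mathcomp Require Import all_boot all_order all_algebra.
From mathcomp Require Import reals.
From mathcomp Require Import ring lra.
Import Order.TTheory GRing.Theory Num.Theory.
Local Open Scope ring_scope.
Set Implicit Arguments. Unset Strict Implicit. Unset Printing Implicit Defensive.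

Section EuclideanNorm.
Variables (R : realType) (q : nat).
Implicit Types (u v : 'rV[R]_q) (a : R).

Definition vnorm v : R := Num.sqrt (\sum_k v 0 k ^+ 2).

Lemma vnorm_ge0 v : 0 <= vnorm v.
Proof. exact: sqrtr_ge0. Qed.

Lemma sumsqr_ge0 v : 0 <= \sum_k v 0 k ^+ 2.
Proof. by apply: sumr_ge0 => k _; apply: sqr_ge0. Qed.

Lemma vnorm_sqr v : vnorm v ^+ 2 = \sum_k v 0 k ^+ 2.
Proof. by rewrite sqr_sqrtr ?sumsqr_ge0. Qed.

Lemma vnorm0 : vnorm 0 = 0.
Proof. by rewrite /vnorm big1 ?sqrtr0 // => k _; rewrite mxE expr0n. Qed.

Lemma vnormZ a v : vnorm (a *: v) = `|a| * vnorm v.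
Proof.
rewrite /vnorm (eq_bigr (fun k => a ^+ 2 * v 0 k ^+ 2)); last first.
  by move=> k _; rewrite mxE exprMn.
by rewrite -mulr_sumr sqrtrM ?sqr_ge0 // sqrtr_sqr.
Qed.

Lemma cauchy_schwarz_sqr u v :
  (\sum_k u 0 k * v 0 k) ^+ 2 <= (\sum_k u 0 k ^+ 2) * (\sum_k v 0 k ^+ 2).
Proof.
set A := \sum_k u 0 k ^+ 2; set B := \sum_k v 0 k ^+ 2; set C := \sum_k _.
have lagrange : \sum_k \sum_l (u 0 k * v 0 l - u 0 l * v 0 k) ^+ 2
    = A * B + B * A - 2 * (C * C).
  rewrite /A /B /C !big_distrlr mulr_sumr -big_split -sumrB /=.
  apply: eq_bigr => k _; rewrite mulr_sumr -big_split -sumrB /=.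
  by apply: eq_bigr => l _; ring.
have : 0 <= \sum_k \sum_l (u 0 k * v 0 l - u 0 l * v 0 k) ^+ 2.
  by apply: sumr_ge0 => k _; apply: sumr_ge0 => l _; apply: sqr_ge0.
rewrite lagrange; nra.
Qed.

Lemma cauchy_schwarz u v : \sum_k u 0 k * v 0 k <= vnorm u * vnorm v.
Proof.
apply: le_trans (ler_norm _) _.
by rewrite -sqrtr_sqr -sqrtrM ?sumsqr_ge0 // ler_sqrt ?mulr_ge0 ?sumsqr_ge0 // cauchy_schwarz_sqr.
Qed.

Lemma vnorm_leE v c : 0 <= c -> (vnorm v <= c) = (\sum_k v 0 k ^+ 2 <= c ^+ 2).
Proof.
by move=> c_ge0; rewrite -(@ler_pXn2r _ 2) ?nnegrE ?vnorm_ge0 // vnorm_sqr.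
Qed.

Lemma ler_vnormD u v : vnorm (u + v) <= vnorm u + vnorm v.
Proof.
rewrite vnorm_leE ?addr_ge0 ?vnorm_ge0 //.
rewrite (eq_bigr (fun k => u 0 k ^+ 2 + v 0 k ^+ 2 + 2 * (u 0 k * v 0 k))); last first.
  by move=> k _; rewrite mxE; ring.
rewrite !big_split /= -mulr_sumr -!vnorm_sqr.
have := cauchy_schwarz u v; nra.
Qed.

Lemma ler_vnorm_sum (I : Type) (r : seq I) (P : pred I) (F : I -> 'rV[R]_q) :
  vnorm (\sum_(i <- r | P i) F i) <= \sum_(i <- r | P i) vnorm (F i).
Proof.
elim/big_ind2: _ => [|u1 c1 u2 c2 h1 h2|//]; first by rewrite vnorm0.
by apply: le_trans (ler_vnormD _ _) _; apply: lerD.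
Qed.

End EuclideanNorm.

Section RowNorms.
Variables (R : realType) (p q : nat).
Implicit Types (M : 'M[R]_(p, q)) (S : {set 'I_p}).

Lemma rownormE M j : rownorm M j = vnorm (row j M).
Proof. by rewrite /rownorm /vnorm; congr Num.sqrt; apply: eq_bigr => k _; rewrite mxE. Qed.

Lemma rownorm_ge0 M j : 0 <= rownorm M j.
Proof. exact: sqrtr_ge0. Qed.

Lemma norm2inf_ge0 M : 0 <= norm2inf M.
Proof. exact: bigmax_ge_id. Qed.

Lemma rownorm_le_norm2inf M j : rownorm M j <= norm2inf M.
Proof. exact: le_bigmax. Qed.

Lemma norm2inf_le M c : 0 <= c -> (forall j, rownorm M j <= c) -> norm2inf M <= c.
Proof. by move=> c_ge0 Mc; apply: bigmax_le. Qed.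

Lemma rownorm_restr S M j :
  rownorm (rowrestr S M) j = if j \in S then rownorm M j else 0.
Proof.
rewrite /rownorm; case: ifP => jS; last first.
  by rewrite big1 ?sqrtr0 // => k _; rewrite mxE jS expr0n.
by congr Num.sqrt; apply: eq_bigr => k _; rewrite mxE jS.
Qed.

Lemma norm21_ge0 M : 0 <= norm21 M.
Proof. by apply: sumr_ge0 => j _; apply: rownorm_ge0. Qed.

Lemma norm21_restr S M : norm21 (rowrestr S M) = \sum_(j in S) rownorm M j.
Proof. by rewrite big_mkcond; apply: eq_bigr => j _; rewrite rownorm_restr. Qed.

Lemma norm21_restrC S M : norm21 M = norm21 (rowrestr S M) + norm21 (rowrestr (~: S) M).
Proof.
rewrite !norm21_restr /norm21 (bigID (mem S)) /=.
by congr (_ + _); apply: eq_bigl => j; rewrite in_setC.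
Qed.

Lemma norm21_restr_le S M c :
  (forall j, j \in S -> rownorm M j <= c) -> norm21 (rowrestr S M) <= #|S|%:R * c.
Proof.
move=> Mc; rewrite norm21_restr -sum1_card natr_sum mulr_suml.
by apply: ler_sum => j jS; rewrite mul1r Mc.
Qed.

Lemma frobE M : frob M = Num.sqrt (\sum_j rownorm M j ^+ 2).
Proof.
congr Num.sqrt; apply: eq_bigr => j _.
by rewrite sqr_sqrtr // sumr_ge0 // => k _; apply: sqr_ge0.
Qed.

Lemma frob_restr_le S M c : 0 <= c ->
  (forall j, j \in S -> rownorm M j <= c) -> frob (rowrestr S M) <= Num.sqrt #|S|%:R * c.
Proof.
move=> c_ge0 Mc; rewrite frobE -(ger0_norm c_ge0) -sqrtr_sqr -sqrtrM ?ler0n //.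
rewrite ler_sqrt ?mulr_ge0 ?ler0n ?sqr_ge0 // -sum1_card natr_sum mulr_suml.
rewrite [leRHS]big_mkcond; apply: ler_sum => j _; rewrite rownorm_restr.
case: ifP => jS; last by rewrite expr0n.
by rewrite mul1r lerXn2r ?nnegrE ?rownorm_ge0 ?Mc.
Qed.

End RowNorms.

Section Incoherence.
Variables (R : realType) (p q : nat) (Psi : 'M[R]_p) (mu : R).
Hypothesis mu_ge0 : 0 <= mu.
Hypothesis Psi_diag : forall j, Psi j j = 1.
Hypothesis Psi_offdiag : forall j j', j' != j -> `|Psi j j'| <= mu.

Lemma row_unmix (D : 'M[R]_(p, q)) j :
  row j D = row j (Psi *m D) - \sum_(j' | j' != j) Psi j j' *: row j' D.
Proof.
rewrite row_mul mulmx_sum_row (bigD1 j) //= mxE Psi_diag scale1r.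
by under eq_bigr => j' _ do rewrite mxE; rewrite addrK.
Qed.

Lemma rownorm_le_incoherent (D : 'M[R]_(p, q)) j :
  rownorm D j <= norm2inf (Psi *m D) + mu * norm21 D.
Proof.
rewrite rownormE row_unmix; apply: le_trans (ler_vnormD _ _) _; apply: lerD.
  by rewrite -rownormE rownorm_le_norm2inf.
rewrite -scaleN1r vnormZ normrN1 mul1r; apply: le_trans (ler_vnorm_sum _ _ _) _.
apply: le_trans (_ : \sum_(j' | j' != j) mu * rownorm D j' <= _).
  apply: ler_sum => j' j'j; rewrite vnormZ -rownormE.
  by apply: ler_wpM2r; [apply: rownorm_ge0 | apply: Psi_offdiag].
rewrite -mulr_sumr ler_wpM2l // [leRHS](bigD1 j) //= lerDr.
exact: rownorm_ge0.
Qed.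

End Incoherence.

Section IncoherentDesign.
Variables (R : realType) (p q s : nat) (alpha : R).
Variables (Psi : 'M[R]_p) (S : {set 'I_p}) (D : 'M[R]_(p, q)).
Hypothesis s_gt0 : (0 < s)%N.
Hypothesis alpha_gt1 : 1 < alpha.
Hypothesis Psi_diag : forall j, Psi j j = 1.
Hypothesis Psi_offdiag :
  forall j j', j' != j -> `|Psi j j'| <= (7 * alpha * s%:R)^-1.
Hypothesis S_small : (#|S| <= s)%N.
Hypothesis D_cone : norm21 (rowrestr (~: S) D) <= 3 * norm21 (rowrestr S D).

Local Notation G := (norm2inf (Psi *m D)).
Local Notation e := ((7 * alpha * s%:R)^-1 * norm21 D).

Let alpha_gt0 : 0 < alpha.
Proof. exact: lt_trans ltr01 alpha_gt1. Qed.

Let alpha1_gt0 : 0 < alpha - 1.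
Proof. by rewrite subr_gt0. Qed.

Let weight_gt0 : 0 < 7 * alpha * s%:R.
Proof. by rewrite !mulr_gt0 ?ltr0n. Qed.

Let norm21_excess : norm21 D = 7 * alpha * s%:R * e.
Proof. by rewrite mulrA mulfV ?mul1r // gt_eqF. Qed.

Let e_ge0 : 0 <= e.
Proof. by rewrite mulr_ge0 ?norm21_ge0 // invr_ge0 ltW. Qed.

Lemma rownorm_le_excess j : rownorm D j <= G + e.
Proof. by apply: rownorm_le_incoherent => //; rewrite invr_ge0 ltW. Qed.

Lemma norm21_le_cone : norm21 D <= 4 * s%:R * (G + e).
Proof.
have supp_le : norm21 (rowrestr S D) <= s%:R * (G + e).
  apply: le_trans (norm21_restr_le (c := G + e) _) _ => [j _|].
    exact: rownorm_le_excess.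
  by rewrite ler_wpM2r ?ler_nat // addr_ge0 ?norm2inf_ge0.
rewrite [leLHS](norm21_restrC S) -mulrA; move: (s%:R * _) supp_le D_cone => c; lra.
Qed.

Lemma excess_le : 7 * (alpha - 1) * e <= 16 * G.
Proof.
have := norm21_le_cone; rewrite {1}norm21_excess mulrAC [leRHS]mulrAC ler_pM2r ?ltr0n //.
move: e_ge0 (norm2inf_ge0 (Psi *m D)); move: (G) (e) => g x; lra.
Qed.

Lemma norm2inf_le_bound : norm2inf D <= (1 + 16 / (7 * (alpha - 1))) * G.
Proof.
have G_ge0 := norm2inf_ge0 (Psi *m D).
apply: le_trans (norm2inf_le (addr_ge0 G_ge0 e_ge0) rownorm_le_excess) _.
rewrite [leRHS]mulrDl mul1r lerD2l [leRHS]mulrAC ler_pdivlMr ?mulr_gt0 // mulrC.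
exact: excess_le.
Qed.

Lemma norm21_le_bound : norm21 D <= alpha / (alpha - 1) * 16 * s%:R * G.
Proof.
have -> : alpha / (alpha - 1) * 16 * s%:R * G = alpha * s%:R * (16 * G) / (alpha - 1).
  by ring.
rewrite ler_pdivlMr // norm21_excess.
have -> : 7 * alpha * s%:R * e * (alpha - 1) = alpha * s%:R * (7 * (alpha - 1) * e).
  by ring.
by rewrite ler_wpM2l ?excess_le // mulr_ge0 ?ler0n ?ltW.
Qed.

Lemma frob_restr_le_bound :
  frob (rowrestr S D) <= alpha / (alpha - 1) * 4 * Num.sqrt s%:R * G.
Proof.
have G_ge0 := norm2inf_ge0 (Psi *m D).
apply: le_trans (frob_restr_le (addr_ge0 G_ge0 e_ge0) (fun j _ => rownorm_le_excess j)) _.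
have -> : alpha / (alpha - 1) * 4 * Num.sqrt s%:R * G
    = Num.sqrt s%:R * (alpha * 4 * G / (alpha - 1)) by ring.
apply: ler_pM; rewrite ?sqrtr_ge0 ?addr_ge0 ?ler_sqrt ?ler_nat //.
rewrite ler_pdivlMr //.
move: excess_le e_ge0 G_ge0 alpha_gt1; move: (G) (e) => g x; nra.
Qed.

End IncoherentDesign.

Theorem lemma4 (R : realType) (n p q s : nat) (alpha : R)
  (X : 'M[R]_(n, p)) (Bstar Bhat : 'M[R]_(p, q)) :
  (1 <= s)%N -> 1 < alpha ->
  let Psi := n%:R^-1 *: (X^T *m X) in
  (forall j : 'I_p, Psi j j = 1) ->
  (forall j j' : 'I_p, j' != j -> `|Psi j j'| <= (7 * alpha * s%:R)^-1) ->
  let S := rowsupp Bstar in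
  (#|S| <= s)%N ->
  let Delta := Bhat - Bstar in
  norm21 (rowrestr (~: S) Delta) <= 3 * norm21 (rowrestr S Delta) ->
  [/\ frob (rowrestr S Delta)
        <= alpha / (alpha - 1) * 4 * Num.sqrt s%:R * norm2inf (Psi *m Delta),
      norm21 Delta <= alpha / (alpha - 1) * 16 * s%:R * norm2inf (Psi *m Delta)
    & norm2inf Delta <= (1 + 16 / (7 * (alpha - 1))) * norm2inf (Psi *m Delta)].
Proof.
move=> s_gt0 alpha_gt1 Psi Psi_diag Psi_offdiag S S_small Delta Delta_cone.
split.
- exact: frob_restr_le_bound s_gt0 alpha_gt1 Psi_diag Psi_offdiag S_small Delta_cone.
- exact: norm21_le_bound s_gt0 alpha_gt1 Psi_diag Psi_offdiag S_small Delta_cone.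
- exact: norm2inf_le_bound s_gt0 alpha_gt1 Psi_diag Psi_offdiag S_small Delta_cone.
Qed.
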